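(* Let $A\colon c_c\to c_c$, $(Ax)_1=x_1$, $(Ax)_n=x_n-x_{n-1}$ ($n>1$), and let $g\equiv 0$ on $c_c$ (so $g^*=\delta_{\{0\}}$ on $\ell^2$). Then the adjoint $A^*\colon\ell^2\to\ell^2$ is injective, the only $y\in\ell^2$ with $g^*(-A^*y)<\infty$ is $y=0$, and hence the Fenchel dual problem $$\sup_{y\in\ell^2}\left(-f^*(y)-g^*(-A^*y)\right)$$ has value $0$, attained at $y=0$. Since the primal problem $\inf_{x\in c_c}\left(f(Ax)+g(x)\right)$ has value $\pi^2/12$, this pair of problems has a positive duality gap $\pi^2/12>0$, although $f,g$ are convex, lower semicontinuous and $0\in\operatorname{core}(A\operatorname{dom} g-\operatorname{dom} f)$.
   Context: Let $c_c$ be the space of finitely supported real sequences with the $\ell^2$-norm; its dual is identified with $\ell^2$ via $\langle y,x\rangle=\sum_n y_nx_n$. Let $f\colon c_c\to\mathbb{R}$, $f(x)=\sum_{n=1}^\infty \frac{n^2}{2}(x_n-n^{-2})^2$. For $h\colon c_c\to(-\infty,\infty]$, $h^*(y)=\sup_{x\in c_c}(\langle y,x\rangle-h(x))$ for $y\in\ell^2$. The adjoint $A^*$ is defined by $\langle A^*y,x\rangle=\langle y,Ax\rangle$. $\delta_{\{0\}}$ is the indicator function of $\{0\}$, $\operatorname{dom}h=\{x:h(x)<\infty\}$, $\operatorname{core}$ denotes the algebraic interior. *)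

From Stdlib Require Import Reals Lra.
From Coquelicot Require Import Coquelicot.
Open Scope R_scope.

(* Sequences are indexed from 0: the paper's coordinate x_n (n >= 1) is x (n-1). *)
Definition seqR := nat -> R.

Definition is_cc (x : seqR) : Prop := exists N : nat, forall n, (N <= n)%nat -> x n = 0.

Definition is_l2 (y : seqR) : Prop := ex_series (fun n => (y n) ^ 2).

Definition l2norm (x : seqR) : R := sqrt (Series (fun n => (x n) ^ 2)).

Definition vadd (x z : seqR) : seqR := fun n => x n + z n.
Definition vsub (x z : seqR) : seqR := fun n => x n - z n.
Definition vscal (t : R) (x : seqR) : seqR := fun n => t * x n.
Definition vopp (x : seqR) : seqR := fun n => - x n.
Definition vzero : seqR := fun _ => 0.

Definition pairing (y x : seqR) : R := Series (fun n => y n * x n).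

Definition f_cc (x : seqR) : R :=
  Series (fun k => (INR (S k))^2 / 2 * (x k - 1 / (INR (S k))^2)^2).

Definition g_cc (x : seqR) : R := 0.

Definition A (x : seqR) : seqR :=
  fun n => match n with O => x O | S m => x (S m) - x m end.

Definition Astar (y : seqR) : seqR := fun n => y n - y (S n).

Definition conj (h : seqR -> R) (y : seqR) : Rbar :=
  Lub_Rbar (fun r => exists x, is_cc x /\ r = pairing y x - h x).

(* dual objective  -f_cc*(y) - g_cc*(-A^* y)  (never +oo for these f_cc, g_cc) *)
Definition dual_obj (y : seqR) : Rbar :=
  Rbar_minus (Rbar_opp (conj f_cc y)) (conj g_cc (vopp (Astar y))).

Definition dual_value : Rbar :=
  Lub_Rbar (fun r => exists y, is_l2 y /\ dual_obj y = Finite r).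

Definition primal_value : Rbar :=
  Glb_Rbar (fun r => exists x, is_cc x /\ r = f_cc (A x) + g_cc x).

Definition convex_cc (h : seqR -> R) : Prop :=
  forall x z t, is_cc x -> is_cc z -> 0 <= t <= 1 ->
    h (vadd (vscal t x) (vscal (1 - t) z)) <= t * h x + (1 - t) * h z.

Definition lsc_cc (h : seqR -> R) : Prop :=
  forall x, is_cc x -> forall eps, 0 < eps -> exists delta, 0 < delta /\
    forall z, is_cc z -> l2norm (vsub z x) < delta -> h x - eps < h z.

Definition in_core (S : seqR -> Prop) (p : seqR) : Prop :=
  forall d, is_cc d -> exists eps, 0 < eps /\
    forall t, 0 <= t <= eps -> S (vadd p (vscal t d)).

(* dom h = { x in c_c | h x < +oo }; for real-valued h this is all of c_c *)
Definition dom (h : seqR -> R) (x : seqR) : Prop := is_cc x.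

Definition Adomg_minus_domf (v : seqR) : Prop :=
  exists x b, dom g_cc x /\ dom f_cc b /\ v = vsub (A x) b.

From Stdlib Require Import Reals Lra Lia FunctionalExtensionality Classical.
From Coquelicot Require Import Coquelicot.
Open Scope R_scope.

(* Dual side: if [A^* y = 0] then [y] is constant, and a constant sequence in l^2 is 0.
   Since [g^* = 0] at [0] and [+oo] elsewhere, only [y = 0] is dual feasible, and the
   dual value is [-f^*(0) = inf f = 0] (approached by truncations of [(1/n^2)_n]).
   Primal side: subtracting the Basel series [sum 1/(2n^2) = pi^2/12] gives, for
   finitely supported [z], [f z = pi^2/12 + sum (n^2 z_n^2 / 2 - z_n)]; on the range of
   [A] the sum [sum z_n] telescopes to 0, so [f (A x) >= pi^2/12 = f (A 0)]. *)

Lemma sum_n_le (a b : nat -> R) N :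
  (forall k, (k <= N)%nat -> a k <= b k) -> sum_n a N <= sum_n b N.
Proof. intros Hab; rewrite !sum_n_Reals; exact (sum_Rle a b N Hab). Qed.

Lemma sum_n_nonneg (a : nat -> R) N : (forall n, 0 <= a n) -> 0 <= sum_n a N.
Proof. intros Ha; rewrite sum_n_Reals; exact (cond_pos_sum a N Ha). Qed.

Lemma sum_n_minus (a b : nat -> R) N :
  sum_n (fun k => a k - b k) N = sum_n a N - sum_n b N.
Proof. rewrite !sum_n_Reals; apply minus_sum. Qed.

Lemma sum_n_le_series (a : nat -> R) l N :
  is_series a l -> (forall n, 0 <= a n) -> sum_n a N <= l.
Proof.
  intros Hs Ha; rewrite sum_n_Reals.
  apply sum_incr; [apply is_series_Reals, Hs | exact Ha].
Qed.

Lemma sum_n_ge_term (a : nat -> R) N k :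
  (forall n, 0 <= a n) -> (k <= N)%nat -> a k <= sum_n a N.
Proof.
  intros Ha; induction N as [|N IH]; intros Hk.
  - replace k with 0%nat by lia; rewrite sum_O; lra.
  - rewrite sum_Sn; unfold plus; simpl.
    destruct (Nat.eq_dec k (S N)) as [->|Hne].
    + assert (0 <= sum_n a N) by (apply sum_n_nonneg, Ha); lra.
    + assert (a k <= sum_n a N) by (apply IH; lia); specialize (Ha (S N)); lra.
Qed.

Lemma sum_n_eq0 (a : nat -> R) N : (forall n, (n <= N)%nat -> a n = 0) -> sum_n a N = 0.
Proof.
  intros Ha; rewrite (sum_n_ext_loc _ (fun _ => 0)) by exact Ha.
  rewrite sum_n_const; apply Rmult_0_r.
Qed.

Lemma sum_n_single (a : nat -> R) k : (forall n, n <> k -> a n = 0) -> sum_n a k = a k.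
Proof.
  intros Ha; destruct k as [|k]; [apply sum_O|].
  rewrite sum_Sn, sum_n_eq0 by (intros n Hn; apply Ha; lia).
  unfold plus; simpl; ring.
Qed.

Lemma is_series_eventually_zero (a : nat -> R) N :
  (forall n, (N < n)%nat -> a n = 0) -> is_series a (sum_n a N).
Proof.
  intros Ha.
  assert (Hstable : forall k, sum_n a (N + k) = sum_n a N).
  { induction k as [|k IH]; [now rewrite Nat.add_0_r|].
    rewrite Nat.add_succ_r, sum_Sn, IH, Ha by lia; unfold plus; simpl; ring. }
  change (is_lim_seq (sum_n a) (sum_n a N)).
  apply (is_lim_seq_ext_loc (fun _ => sum_n a N)); [|apply is_lim_seq_const].
  exists N; intros n Hn; replace n with (N + (n - N))%nat by lia; now rewrite Hstable.
Qed.

Lemma Lub_Rbar_approx (E : R -> Prop) L :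
  (forall r, E r -> r <= L) -> (forall eps, 0 < eps -> exists r, E r /\ L - eps < r) ->
  Lub_Rbar E = Finite L.
Proof.
  intros Hub Happrox; apply is_lub_Rbar_unique; split.
  - intros r Er; exact (Hub r Er).
  - intros [b| |] Hb; simpl; auto.
    + destruct (Rle_or_lt L b) as [|HbL]; auto.
      destruct (Happrox (L - b)) as [r [Er Hr]]; [lra|].
      specialize (Hb r Er); simpl in Hb; lra.
    + destruct (Happrox 1) as [r [Er _]]; [lra|]; exact (Hb r Er).
Qed.

Lemma Lub_Rbar_unbounded (E : R -> Prop) :
  (forall M, exists r, E r /\ M < r) -> Lub_Rbar E = p_infty.
Proof.
  intros Hunb; apply is_lub_Rbar_unique; split.
  - intros r _; exact I.
  - intros [b| |] Hb; simpl; auto.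
    + destruct (Hunb b) as [r [Er Hr]]; specialize (Hb r Er); simpl in Hb; lra.
    + destruct (Hunb 0) as [r [Er _]]; exact (Hb r Er).
Qed.

Lemma Glb_Rbar_min (E : R -> Prop) L :
  (forall r, E r -> L <= r) -> E L -> Glb_Rbar E = Finite L.
Proof.
  intros Hlb EL; apply is_glb_Rbar_unique; split.
  - intros r Er; exact (Hlb r Er).
  - intros b Hb; exact (Hb L EL).
Qed.

(** * The Basel sum *)

(* [auto_derive] leaves [INR (S k)] unfolded to this match. *)
Lemma INR_succ_match k : (match k with O => 1 | S _ => INR k + 1 end) = INR k + 1.
Proof. destruct k; simpl; ring. Qed.

Definition Icos k := RInt (fun x => cos x ^ k) 0 (PI / 2).
Definition Jcos k := RInt (fun x => x ^ 2 * cos x ^ k) 0 (PI / 2).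

Lemma is_RInt_Icos k : is_RInt (fun x => cos x ^ k) 0 (PI / 2) (Icos k).
Proof.
  apply (RInt_correct (V := R_CompleteNormedModule)), ex_RInt_continuous.
  intros z _; apply (@ex_derive_continuous R_AbsRing R_NormedModule); auto_derive; auto.
Qed.

Lemma is_RInt_Jcos k : is_RInt (fun x => x ^ 2 * cos x ^ k) 0 (PI / 2) (Jcos k).
Proof.
  apply (RInt_correct (V := R_CompleteNormedModule)), ex_RInt_continuous.
  intros z _; apply (@ex_derive_continuous R_AbsRing R_NormedModule); auto_derive; auto.
Qed.

Lemma is_RInt_ext_unique (f g : R -> R) a b l1 l2 :
  is_RInt f a b l1 -> is_RInt g a b l2 -> (forall x, f x = g x) -> l1 = l2.
Proof.
  intros H1 H2 Hfg.
  rewrite <- (is_RInt_unique _ _ _ _ H1), <- (is_RInt_unique _ _ _ _ H2).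
  now apply RInt_ext.
Qed.

Lemma is_derive_sin_cos_pow k x :
  is_derive (fun x => sin x * cos x ^ S k) x
    ((INR k + 2) * cos x ^ S (S k) - (INR k + 1) * cos x ^ k).
Proof.
  auto_derive; auto; rewrite INR_succ_match.
  assert (Hs : sin x * sin x = 1 - cos x * cos x)
    by (generalize (sin2_cos2 x); unfold Rsqr; lra).
  simpl; set (c := cos x) in *; set (s := sin x) in *; set (p := c ^ k).
  transitivity (c * (c * p) - (s * s) * ((INR k + 1) * p)); [ring|].
  rewrite Hs; ring.
Qed.

Lemma is_derive_Jcos_primitive k x :
  is_derive
    (fun x => x * cos x ^ S (S k) + (INR k / 2 + 1) * x ^ 2 * sin x * cos x ^ S k) x
    (cos x ^ S (S k) + 2 * (INR k / 2 + 1) ^ 2 * x ^ 2 * cos x ^ S (S k)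
     - (INR k / 2 + 1) * (INR k + 1) * x ^ 2 * cos x ^ k).
Proof.
  auto_derive; auto; rewrite INR_succ_match.
  assert (Hs : sin x * sin x = 1 - cos x * cos x)
    by (generalize (sin2_cos2 x); unfold Rsqr; lra).
  simpl; set (c := cos x) in *; set (s := sin x) in *; set (p := c ^ k).
  transitivity (c * (c * p) + x * (- s * ((INR k + 1 + 1) * (c * p))) +
    (((INR k / 2 + 1) * (2 * x) * s + (INR k / 2 + 1) * (x * x) * c) * (c * p) -
     (INR k / 2 + 1) * (x * x) * (s * s) * ((INR k + 1) * p))); [ring|].
  rewrite Hs; field.
Qed.

Lemma Icos_rec k : (INR k + 2) * Icos (S (S k)) = (INR k + 1) * Icos k.
Proof.
  assert (Hcont : forall x, continuous
    (fun x => (INR k + 2) * cos x ^ S (S k) - (INR k + 1) * cos x ^ k) x).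
  { intros; apply (@ex_derive_continuous R_AbsRing R_NormedModule); auto_derive; auto. }
  assert (Hftc := is_RInt_derive _ _ 0 (PI / 2)
    (fun x _ => is_derive_sin_cos_pow k x) (fun x _ => Hcont x)).
  assert (Hlin := is_RInt_minus _ _ _ _ _ _
    (is_RInt_scal _ _ _ (INR k + 2) _ (is_RInt_Icos (S (S k))))
    (is_RInt_scal _ _ _ (INR k + 1) _ (is_RInt_Icos k))).
  generalize (is_RInt_ext_unique _ _ _ _ _ _ Hlin Hftc (fun x => eq_refl)).
  unfold minus, plus, opp, scal; simpl; unfold mult; simpl.
  rewrite sin_PI2, cos_PI2, sin_0; intros; nra.
Qed.

Lemma Jcos_rec k :
  Icos (S (S k)) + 2 * (INR k / 2 + 1) ^ 2 * Jcos (S (S k))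
  = (INR k / 2 + 1) * (INR k + 1) * Jcos k.
Proof.
  assert (Hcont : forall x, continuous
    (fun x => cos x ^ S (S k) + 2 * (INR k / 2 + 1) ^ 2 * x ^ 2 * cos x ^ S (S k)
              - (INR k / 2 + 1) * (INR k + 1) * x ^ 2 * cos x ^ k) x).
  { intros; apply (@ex_derive_continuous R_AbsRing R_NormedModule); auto_derive; auto. }
  assert (Hftc := is_RInt_derive _ _ 0 (PI / 2)
    (fun x _ => is_derive_Jcos_primitive k x) (fun x _ => Hcont x)).
  assert (Hlin := is_RInt_minus _ _ _ _ _ _
    (is_RInt_plus _ _ _ _ _ _ (is_RInt_Icos (S (S k)))
       (is_RInt_scal _ _ _ (2 * (INR k / 2 + 1) ^ 2) _ (is_RInt_Jcos (S (S k)))))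
    (is_RInt_scal _ _ _ ((INR k / 2 + 1) * (INR k + 1)) _ (is_RInt_Jcos k))).
  generalize (is_RInt_ext_unique _ _ _ _ _ _ Hlin Hftc
    (fun x => ltac:(unfold minus, plus, opp, scal; simpl; unfold mult; simpl; ring))).
  unfold minus, plus, opp, scal; simpl; unfold mult; simpl.
  rewrite sin_PI2, cos_PI2, sin_0; intros; nra.
Qed.

Lemma Icos_0 : Icos 0 = PI / 2.
Proof.
  rewrite (is_RInt_ext_unique _ _ _ _ _ _ (is_RInt_Icos 0) (is_RInt_const 0 (PI / 2) 1)
    (fun x => eq_refl)).
  unfold scal; simpl; unfold mult; simpl; ring.
Qed.

Lemma Jcos_0 : Jcos 0 = (PI / 2) ^ 3 / 3.
Proof.
  assert (Hder : forall x, is_derive (fun x => x ^ 3 / 3) x (x ^ 2))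
    by (intros; auto_derive; auto; field).
  assert (Hcont : forall x, continuous (fun x => x ^ 2) x)
    by (intros; apply (@ex_derive_continuous R_AbsRing R_NormedModule); auto_derive; auto).
  assert (Hftc := is_RInt_derive _ _ 0 (PI / 2) (fun x _ => Hder x) (fun x _ => Hcont x)).
  rewrite (is_RInt_ext_unique _ _ _ _ _ _ (is_RInt_Jcos 0) Hftc (fun x => ltac:(simpl; ring))).
  unfold minus, plus, opp; simpl; field.
Qed.

Lemma INR_double m : INR (2 * m) = 2 * INR m.
Proof. rewrite mult_INR; simpl; ring. Qed.

Lemma Icos_even_pos m : 0 < Icos (2 * m).
Proof.
  induction m as [|m IH].
  - simpl; rewrite Icos_0; generalize PI_RGT_0; lra.
  - replace (2 * S m)%nat with (S (S (2 * m))) by lia.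
    generalize (Icos_rec (2 * m)) (pos_INR m); rewrite INR_double; nra.
Qed.

Lemma le_4sin x : 0 <= x <= PI / 2 -> x <= 4 * sin x.
Proof.
  intros Hx; generalize PI_4 PI_RGT_0; intros HP4 HP.
  destruct (SIN x) as [Hlb _]; try lra.
  replace (sin_lb x) with (x - x ^ 3 / 6 + x ^ 5 / 120 - x ^ 7 / 5040) in Hlb
    by (unfold sin_lb, sin_approx, sin_term; simpl; field).
  assert (0 <= x ^ 2 <= 4) by nra.
  assert (0 <= x ^ 4 * (1 / 120 - x ^ 2 / 5040)) by (apply Rmult_le_pos; nra).
  nra.
Qed.

(* The weight [x^2] is at most [16 sin^2 x], and [sin^2 = 1 - cos^2] turns [cos^k sin^2]
   into [cos^k - cos^(k+2)]. *)
Lemma Jcos_bounds k : 0 <= Jcos k <= 16 * (Icos k - Icos (S (S k))).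
Proof.
  assert (Hab : 0 <= PI / 2) by (generalize PI_RGT_0; lra).
  split.
  - generalize (is_RInt_le _ _ _ _ _ _ Hab (is_RInt_const 0 (PI / 2) 0) (is_RInt_Jcos k)).
    unfold scal; simpl; unfold mult; simpl; rewrite Rmult_0_r; intros Hle; apply Hle.
    intros x Hx; apply Rmult_le_pos; [apply pow2_ge_0|].
    apply pow_le, Rlt_le, cos_gt_0; lra.
  - apply (is_RInt_le _ _ _ _ _ _ Hab (is_RInt_Jcos k)
      (is_RInt_scal _ _ _ 16 _
         (is_RInt_minus _ _ _ _ _ _ (is_RInt_Icos k) (is_RInt_Icos (S (S k)))))).
    intros x Hx; unfold scal, minus, plus, opp; simpl; unfold mult; simpl.
    assert (Hc := cos_gt_0 x ltac:(lra) ltac:(lra)).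
    assert (Hp : 0 <= cos x ^ k) by (apply pow_le; lra).
    assert (Hs := le_4sin x ltac:(lra)).
    assert (Hpyth := sin2_cos2 x); unfold Rsqr in Hpyth.
    assert (x * x <= 16 * (sin x * sin x)) by nra.
    assert (x * x * cos x ^ k <= 16 * (sin x * sin x) * cos x ^ k) by nra.
    replace (cos x * (cos x * cos x ^ k)) with ((1 - sin x * sin x) * cos x ^ k)
      by (rewrite <- Hpyth; ring).
    nra.
Qed.

Definition matsuoka_ratio m := Jcos (2 * m) / Icos (2 * m).

Lemma Icos_even_succ m :
  Icos (S (S (2 * m))) = (2 * INR m + 1) / (2 * INR m + 2) * Icos (2 * m).
Proof.
  generalize (Icos_rec (2 * m)) (pos_INR m); rewrite INR_double; intros Hrec Hm.
  apply (Rmult_eq_reg_l (2 * INR m + 2)); [rewrite Hrec; field | ]; lra.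
Qed.

Lemma matsuoka_ratio_step m :
  matsuoka_ratio m - matsuoka_ratio (S m) = 1 / (2 * INR (S m) ^ 2).
Proof.
  unfold matsuoka_ratio; replace (2 * S m)%nat with (S (S (2 * m))) by lia.
  generalize (Jcos_rec (2 * m)) (Icos_even_succ m) (Icos_even_pos m) (pos_INR m).
  rewrite INR_double, S_INR.
  set (a := INR m); set (I := Icos (2 * m)); set (I2 := Icos (S (S (2 * m))));
    set (J := Jcos (2 * m)); set (J2 := Jcos (S (S (2 * m)))).
  intros HJrec HI2 HI Ha.
  replace (2 * a / 2 + 1) with (a + 1) in HJrec by field.
  assert (HJ2 : J2 = ((a + 1) * (2 * a + 1) * J - I2) / (2 * (a + 1) ^ 2)).
  { apply (Rmult_eq_reg_l (2 * (a + 1) ^ 2)); [field_simplify; nra | nra]. }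
  rewrite HJ2, HI2; field; repeat split; nra.
Qed.

Lemma matsuoka_ratio_bounds m : 0 <= matsuoka_ratio m <= 8 / (INR m + 1).
Proof.
  unfold matsuoka_ratio.
  generalize (Jcos_bounds (2 * m)) (Icos_even_succ m) (Icos_even_pos m) (pos_INR m).
  set (a := INR m); set (I := Icos (2 * m)); set (J := Jcos (2 * m)).
  intros HJ HI2 HI Ha; rewrite HI2 in HJ.
  split; [apply Rdiv_le_0_compat; lra|].
  apply (Rmult_le_reg_r I); auto; field_simplify; try lra.
  replace (8 * I / (a + 1)) with (16 * (I - (2 * a + 1) / (2 * a + 2) * I)) by (field; lra).
  lra.
Qed.

Lemma matsuoka_ratio_0 : matsuoka_ratio 0 = PI ^ 2 / 12.
Proof. unfold matsuoka_ratio; simpl; rewrite Icos_0, Jcos_0; field; generalize PI_RGT_0; lra. Qed.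

Lemma is_lim_seq_matsuoka_ratio : is_lim_seq matsuoka_ratio 0.
Proof.
  apply is_lim_seq_le_le with (u := fun _ => 0) (w := fun m => 8 * / (INR m + 1)).
  - intros m; exact (matsuoka_ratio_bounds m).
  - apply is_lim_seq_const.
  - replace (Finite 0) with (Rbar_mult 8 (Rbar_inv p_infty)) by (simpl; f_equal; ring).
    apply is_lim_seq_scal_l, is_lim_seq_inv; [|discriminate].
    apply (is_lim_seq_ext (fun m => INR (S m))); [intros; apply S_INR|].
    apply (is_lim_seq_incr_1 INR), is_lim_seq_INR.
Qed.

Definition basel_term k := 1 / (2 * INR (S k) ^ 2).

(* Matsuoka's proof: the ratios [J_2m / I_2m] telescope to the partial sums and tend to 0. *)
Lemma basel_half : is_series basel_term (PI ^ 2 / 12).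
Proof.
  assert (Hpartial : forall N, sum_n basel_term N = matsuoka_ratio 0 - matsuoka_ratio (S N)).
  { induction N as [|N IH].
    - rewrite sum_O; generalize (matsuoka_ratio_step 0); unfold basel_term; lra.
    - rewrite sum_Sn, IH; unfold plus; simpl.
      generalize (matsuoka_ratio_step (S N)); unfold basel_term; lra. }
  generalize (is_lim_seq_minus' _ _ _ _ (is_lim_seq_const (matsuoka_ratio 0))
    (proj1 (is_lim_seq_incr_1 _ _) is_lim_seq_matsuoka_ratio)).
  rewrite matsuoka_ratio_0, Rminus_0_r; intros Hlim.
  apply (is_lim_seq_ext _ (sum_n basel_term)) in Hlim; [exact Hlim|].
  intros N; rewrite Hpartial, matsuoka_ratio_0; reflexivity.
Qed.

(** * The adjoint of [A] and the conjugate of [g] *)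

Lemma is_cc_vzero : is_cc vzero.
Proof. exists 0%nat; reflexivity. Qed.

Lemma is_l2_vzero : is_l2 vzero.
Proof.
  exists (sum_n (fun n => vzero n ^ 2) 0).
  apply is_series_eventually_zero; intros; unfold vzero; ring.
Qed.

Lemma is_l2_shift y : is_l2 y -> is_l2 (fun n => y (S n)).
Proof. exact (proj1 (ex_series_incr_1 (fun n => y n ^ 2))). Qed.

Lemma is_l2_sub a b : is_l2 a -> is_l2 b -> is_l2 (fun n => a n - b n).
Proof.
  intros Ha Hb.
  apply (@ex_series_le R_AbsRing R_CompleteNormedModule _
           (fun n => plus (scal 2 (a n ^ 2)) (scal 2 (b n ^ 2)))).
  - intros n; unfold norm, plus, scal; simpl; unfold abs, mult; simpl.
    rewrite Rabs_pos_eq by apply pow2_ge_0.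
    generalize (pow2_ge_0 (a n + b n)); simpl; nra.
  - apply (@ex_series_plus R_AbsRing R_NormedModule);
      apply (@ex_series_scal_l R_AbsRing R_NormedModule); assumption.
Qed.

Lemma is_l2_const_eq0 c : is_l2 (fun _ => c) -> c = 0.
Proof.
  intros Hl; apply ex_series_lim_0, is_lim_seq_unique in Hl.
  rewrite Lim_seq_const in Hl; injection Hl; intros Hc2; nra.
Qed.

Lemma is_l2_Astar y : is_l2 y -> is_l2 (Astar y).
Proof. intros Hy; exact (is_l2_sub y _ Hy (is_l2_shift y Hy)). Qed.

Lemma sum_n_Astar_mul y x N :
  sum_n (fun n => Astar y n * x n) N = sum_n (fun n => y n * A x n) N - y (S N) * x N.
Proof.
  induction N as [|N IH].
  - rewrite !sum_O; unfold Astar, A; simpl; ring.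
  - rewrite !sum_Sn, IH; unfold plus, Astar; simpl; ring.
Qed.

Lemma pairing_Astar y x : is_cc x -> pairing (Astar y) x = pairing y (A x).
Proof.
  intros [N HN]; unfold pairing.
  rewrite (is_series_unique _ _ (is_series_eventually_zero (fun n => Astar y n * x n) N
             ltac:(intros n Hn; cbv beta; rewrite HN by lia; ring))).
  rewrite (is_series_unique _ _ (is_series_eventually_zero (fun n => y n * A x n) N
             ltac:(intros [|n] Hn; [lia|]; cbv beta; unfold A; rewrite !HN by lia; ring))).
  rewrite sum_n_Astar_mul, (HN N) by lia; ring.
Qed.

Lemma Astar_inj y1 y2 : is_l2 y1 -> is_l2 y2 -> Astar y1 = Astar y2 -> y1 = y2.
Proof.
  intros H1 H2 Heq.
  assert (Hconst : forall n, y1 n - y2 n = y1 0%nat - y2 0%nat).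
  { induction n as [|n IH]; [reflexivity|].
    rewrite <- IH; generalize (equal_f Heq n); unfold Astar; lra. }
  assert (Hd0 : y1 0%nat - y2 0%nat = 0).
  { apply is_l2_const_eq0.
    apply (ex_series_ext (fun n => (y1 n - y2 n) ^ 2)); [intros; now rewrite Hconst|].
    exact (is_l2_sub y1 y2 H1 H2). }
  apply functional_extensionality; intros n; generalize (Hconst n); lra.
Qed.

Lemma Astar_vzero : Astar vzero = vzero.
Proof. apply functional_extensionality; intros; unfold Astar, vzero; ring. Qed.

Lemma vopp_Astar_neq0 y : is_l2 y -> y <> vzero -> vopp (Astar y) <> vzero.
Proof.
  intros Hl Hy Heq; apply Hy, Astar_inj; [exact Hl | exact is_l2_vzero |].
  rewrite Astar_vzero; apply functional_extensionality; intros n.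
  generalize (equal_f Heq n); unfold vopp, vzero; lra.
Qed.

Lemma pairing_vzero x : pairing vzero x = 0.
Proof.
  unfold pairing.
  rewrite (is_series_unique _ _ (is_series_eventually_zero (fun n => vzero n * x n) 0
             ltac:(intros; unfold vzero; ring))).
  rewrite sum_O; unfold vzero; ring.
Qed.

Definition unit_seq (k : nat) (c : R) : seqR := fun n => if Nat.eqb n k then c else 0.

Lemma is_cc_unit_seq k c : is_cc (unit_seq k c).
Proof.
  exists (S k); intros n Hn; unfold unit_seq.
  destruct (Nat.eqb_spec n k); [lia | reflexivity].
Qed.

Lemma pairing_unit_seq y k c : pairing y (unit_seq k c) = y k * c.
Proof.
  assert (Hoff : forall n, n <> k -> y n * unit_seq k c n = 0).
  { intros n Hn; unfold unit_seq; destruct (Nat.eqb_spec n k); [lia | ring]. }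
  unfold pairing.
  rewrite (is_series_unique _ _ (is_series_eventually_zero _ k
             (fun n Hn => Hoff n ltac:(lia)))).
  rewrite sum_n_single by exact Hoff; unfold unit_seq; now rewrite Nat.eqb_refl.
Qed.

Lemma conj_g_vzero : conj g_cc vzero = Finite 0.
Proof.
  apply Lub_Rbar_approx.
  - intros r [x [_ ->]]; rewrite pairing_vzero; unfold g_cc; lra.
  - intros eps Heps; exists 0; split; [|lra].
    exists vzero; split; [exact is_cc_vzero|]; rewrite pairing_vzero; unfold g_cc; ring.
Qed.

Lemma conj_g_neq0 y : y <> vzero -> conj g_cc y = p_infty.
Proof.
  intros Hy.
  destruct (not_all_ex_not _ _ (fun Hall => Hy (functional_extensionality _ _ Hall)))
    as [k Hk].
  apply Lub_Rbar_unbounded; intros M; exists (Rabs M + 1); split.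
  - exists (unit_seq k ((Rabs M + 1) / y k)); split; [apply is_cc_unit_seq|].
    rewrite pairing_unit_seq; unfold g_cc; field; exact Hk.
  - generalize (Rle_abs M); lra.
Qed.

Lemma conj_g_Astar_finite y :
  is_l2 y -> Rbar_lt (conj g_cc (vopp (Astar y))) p_infty -> y = vzero.
Proof.
  intros Hl Hlt; apply NNPP; intros Hy.
  rewrite conj_g_neq0 in Hlt by (apply vopp_Astar_neq0; assumption); exact Hlt.
Qed.

(** * The function [f], the dual value and the primal value *)

Definition f_term (x : seqR) (k : nat) : R :=
  INR (S k) ^ 2 / 2 * (x k - 1 / INR (S k) ^ 2) ^ 2.

Lemma INR_S_pos k : 0 < INR (S k).
Proof. apply lt_0_INR; lia. Qed.

Lemma f_term_nonneg x k : 0 <= f_term x k.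
Proof.
  unfold f_term; apply Rmult_le_pos; [|apply pow2_ge_0].
  generalize (pow2_ge_0 (INR (S k))); lra.
Qed.

Lemma f_term_sub_basel x k :
  f_term x k - basel_term k = INR (S k) ^ 2 / 2 * x k ^ 2 - x k.
Proof. unfold f_term, basel_term; generalize (INR_S_pos k); intros; field; lra. Qed.

Lemma is_series_f_term x N : (forall n, (N <= n)%nat -> x n = 0) ->
  is_series (f_term x) (PI ^ 2 / 12 + sum_n (fun k => INR (S k) ^ 2 / 2 * x k ^ 2 - x k) N).
Proof.
  intros HN.
  assert (Hfin := is_series_eventually_zero (fun k => INR (S k) ^ 2 / 2 * x k ^ 2 - x k) N
    ltac:(intros n Hn; cbv beta; rewrite HN by lia; ring)).
  refine (is_series_ext _ _ _ _ (is_series_plus _ _ _ _ basel_half Hfin)).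
  intros k; change (basel_term k + (INR (S k) ^ 2 / 2 * x k ^ 2 - x k) = f_term x k).
  rewrite <- f_term_sub_basel; ring.
Qed.

Lemma f_cc_eventually_zero x N : (forall n, (N <= n)%nat -> x n = 0) ->
  f_cc x = PI ^ 2 / 12 + sum_n (fun k => INR (S k) ^ 2 / 2 * x k ^ 2 - x k) N.
Proof. intros HN; apply is_series_unique, is_series_f_term, HN. Qed.

Lemma f_cc_ge_partial x M : is_cc x -> sum_n (f_term x) M <= f_cc x.
Proof.
  intros [N HN]; unfold f_cc; fold (f_term x).
  rewrite (is_series_unique _ _ (is_series_f_term x N HN)).
  apply sum_n_le_series; [apply is_series_f_term, HN | apply f_term_nonneg].
Qed.

Lemma f_cc_nonneg x : is_cc x -> 0 <= f_cc x.
Proof.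
  intros Hx; apply Rle_trans with (sum_n (f_term x) 0).
  - apply sum_n_nonneg, f_term_nonneg.
  - apply f_cc_ge_partial, Hx.
Qed.

Definition basel_truncation (M : nat) : seqR :=
  fun k => if Nat.leb k M then 1 / INR (S k) ^ 2 else 0.

Lemma is_cc_basel_truncation M : is_cc (basel_truncation M).
Proof.
  exists (S M); intros n Hn; unfold basel_truncation.
  destruct (Nat.leb_spec n M); [lia | reflexivity].
Qed.

Lemma f_cc_basel_truncation M :
  f_cc (basel_truncation M) = PI ^ 2 / 12 - sum_n basel_term M.
Proof.
  assert (Htail : forall n, (M < n)%nat -> basel_truncation M n = 0).
  { intros n Hn; unfold basel_truncation; destruct (Nat.leb_spec n M); [lia | reflexivity]. }
  rewrite (f_cc_eventually_zero _ (S M)) by (intros n Hn; apply Htail; lia).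
  rewrite sum_Sn, Htail by lia.
  rewrite (sum_n_ext_loc _ (fun k => 0 - basel_term k)).
  - rewrite sum_n_minus, sum_n_eq0 by reflexivity; unfold plus; simpl; ring.
  - intros k Hk; unfold basel_truncation, basel_term.
    rewrite (proj2 (Nat.leb_le k M)) by exact Hk.
    generalize (INR_S_pos k); intros; change (@eq R (INR (S k) ^ 2 / 2 * (1 / INR (S k) ^ 2) ^ 2 - 1 / INR (S k) ^ 2) (0 - 1 / (2 * INR (S k) ^ 2))); field; lra.
Qed.

Lemma conj_f_vzero : conj f_cc vzero = Finite 0.
Proof.
  apply Lub_Rbar_approx.
  - intros r [x [Hx ->]]; rewrite pairing_vzero; generalize (f_cc_nonneg x Hx); lra.
  - intros eps Heps.
    assert (Hsum : is_lim_seq (sum_n basel_term) (PI ^ 2 / 12)) by exact basel_half.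
    destruct (proj2 (is_lim_seq_spec _ _) Hsum (mkposreal eps Heps)) as [M HM].
    specialize (HM M (le_n _)); simpl in HM; apply Rabs_def2 in HM.
    exists (0 - f_cc (basel_truncation M)); split.
    + exists (basel_truncation M); split; [apply is_cc_basel_truncation|].
      now rewrite pairing_vzero.
    + rewrite f_cc_basel_truncation; lra.
Qed.

Lemma dual_obj_vzero : dual_obj vzero = Finite 0.
Proof.
  unfold dual_obj; rewrite Astar_vzero.
  replace (vopp vzero) with vzero
    by (apply functional_extensionality; intros; unfold vopp, vzero; ring).
  rewrite conj_f_vzero, conj_g_vzero; simpl; f_equal; ring.
Qed.

Lemma dual_obj_finite y r : is_l2 y -> dual_obj y = Finite r -> r = 0.
Proof.
  intros Hl Hr; destruct (classic (y = vzero)) as [->|Hy].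
  - rewrite dual_obj_vzero in Hr; now injection Hr.
  - (* The value is [-f^*(y) - (+oo)], which Coquelicot evaluates to [-oo], or to the
       junk value [0] of [+oo - oo] if [f^*(y) = -oo]. *)
    unfold dual_obj in Hr; rewrite conj_g_neq0 in Hr by (apply vopp_Astar_neq0; assumption).
    destruct (conj f_cc y); simpl in Hr; try discriminate; now injection Hr.
Qed.

Lemma dual_value_eq0 : dual_value = Finite 0.
Proof.
  apply Lub_Rbar_approx.
  - intros r [y [Hy Hr]]; rewrite (dual_obj_finite y r Hy Hr); lra.
  - intros eps Heps; exists 0; split; [|lra].
    exists vzero; split; [exact is_l2_vzero | exact dual_obj_vzero].
Qed.

Lemma sum_n_A x N : sum_n (A x) N = x N.
Proof.
  induction N as [|N IH]; [now rewrite sum_O|].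
  rewrite sum_Sn, IH; unfold plus; simpl; ring.
Qed.

Lemma A_vzero : A vzero = vzero.
Proof. apply functional_extensionality; intros [|n]; unfold A, vzero; simpl; ring. Qed.

Lemma f_cc_vzero : f_cc vzero = PI ^ 2 / 12.
Proof.
  rewrite (f_cc_eventually_zero vzero 0) by reflexivity.
  rewrite sum_O; unfold vzero; ring.
Qed.

Lemma f_cc_A_ge x : is_cc x -> PI ^ 2 / 12 <= f_cc (A x).
Proof.
  intros [N HN].
  rewrite (f_cc_eventually_zero (A x) (S N)).
  2: { intros [|n] Hn; [lia|]; unfold A; rewrite !HN by lia; ring. }
  rewrite sum_n_minus, sum_n_A, (HN (S N)) by lia.
  assert (0 <= sum_n (fun k => INR (S k) ^ 2 / 2 * A x k ^ 2) (S N)).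
  { apply sum_n_nonneg; intros k; apply Rmult_le_pos; [|apply pow2_ge_0].
    generalize (pow2_ge_0 (INR (S k))); lra. }
  lra.
Qed.

Lemma primal_value_eq : primal_value = Finite (PI ^ 2 / 12).
Proof.
  apply Glb_Rbar_min.
  - intros r [x [Hx ->]]; unfold g_cc; generalize (f_cc_A_ge x Hx); lra.
  - exists vzero; split; [exact is_cc_vzero|].
    rewrite A_vzero, f_cc_vzero; unfold g_cc; ring.
Qed.

(** * Convexity, lower semicontinuity and the core condition *)

Lemma f_term_convex x z t k : 0 <= t <= 1 ->
  f_term (vadd (vscal t x) (vscal (1 - t) z)) k <= t * f_term x k + (1 - t) * f_term z k.
Proof.
  intros Ht; unfold f_term, vadd, vscal.
  set (w := INR (S k) ^ 2); set (a := 1 / w).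
  assert (Hgap : t * (w / 2 * (x k - a) ^ 2) + (1 - t) * (w / 2 * (z k - a) ^ 2)
                 - w / 2 * (t * x k + (1 - t) * z k - a) ^ 2
               = w / 2 * (t * (1 - t)) * (x k - z k) ^ 2) by ring.
  assert (0 <= w / 2 * (t * (1 - t)) * (x k - z k) ^ 2).
  { apply Rmult_le_pos; [apply Rmult_le_pos|apply pow2_ge_0]; [|nra].
    generalize (pow2_ge_0 (INR (S k))); unfold w; lra. }
  lra.
Qed.

Lemma f_convex : convex_cc f_cc.
Proof.
  intros x z t [N1 H1] [N2 H2] Ht.
  set (N := Nat.max N1 N2).
  assert (Hx := is_series_f_term x N ltac:(intros n Hn; apply H1; lia)).
  assert (Hz := is_series_f_term z N ltac:(intros n Hn; apply H2; lia)).
  assert (Hcomb := is_series_plus _ _ _ _ (is_series_scal t _ _ Hx) (is_series_scal (1 - t) _ _ Hz)).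
  unfold f_cc; fold (f_term x) (f_term z) (f_term (vadd (vscal t x) (vscal (1 - t) z))).
  rewrite (is_series_unique _ _ Hx), (is_series_unique _ _ Hz).
  apply Rle_trans with (Series (fun n => t * f_term x n + (1 - t) * f_term z n)).
  - apply Series_le; [|eexists; exact Hcomb].
    intros n; split; [apply f_term_nonneg | apply f_term_convex, Ht].
  - right; exact (is_series_unique _ _ Hcomb).
Qed.

Lemma g_convex : convex_cc g_cc.
Proof. intros x z t _ _ _; unfold g_cc; lra. Qed.

Lemma g_lsc : lsc_cc g_cc.
Proof. intros x _ eps Heps; exists 1; split; [lra|]; intros; unfold g_cc; lra. Qed.

Lemma Rabs_le_l2norm d k : is_cc d -> Rabs (d k) <= l2norm d.
Proof.
  intros [N HN]; unfold l2norm.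
  rewrite (is_series_unique _ _ (is_series_eventually_zero (fun n => d n ^ 2) (Nat.max N k)
             ltac:(intros n Hn; cbv beta; rewrite HN by lia; ring))).
  rewrite <- sqrt_Rsqr_abs; apply sqrt_le_1_alt.
  generalize (sum_n_ge_term (fun n => d n ^ 2) (Nat.max N k) k
                (fun n => pow2_ge_0 (d n)) ltac:(lia)).
  unfold Rsqr; simpl; lra.
Qed.

Lemma f_term_perturb x z k delta : Rabs (z k - x k) < delta ->
  f_term x k - delta * (INR (S k) ^ 2 * Rabs (x k - 1 / INR (S k) ^ 2)) <= f_term z k.
Proof.
  intros Hd; unfold f_term.
  set (w := INR (S k) ^ 2); set (e := x k - 1 / w); set (d := z k - x k) in Hd |- *.
  replace (z k - 1 / w) with (e + d) by (unfold e, d; ring).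
  assert (Hw : 0 <= w) by apply pow2_ge_0.
  assert (Hed : - (e * d) <= Rabs e * delta).
  { generalize (Rle_abs (- (e * d))); rewrite Rabs_Ropp, Rabs_mult; intros.
    assert (Rabs e * Rabs d <= Rabs e * delta)
      by (apply Rmult_le_compat_l; [apply Rabs_pos | lra]).
    lra. }
  assert (0 <= w / 2 * (2 * e * d + d ^ 2 + 2 * delta * Rabs e)).
  { apply Rmult_le_pos; [lra|]; generalize (pow2_ge_0 d); lra. }
  assert (w / 2 * (e + d) ^ 2 - (w / 2 * e ^ 2 - delta * (w * Rabs e))
          = w / 2 * (2 * e * d + d ^ 2 + 2 * delta * Rabs e)) by field.
  lra.
Qed.

Lemma sum_n_f_term_perturb x z M delta : (forall k, Rabs (z k - x k) < delta) ->
  sum_n (f_term x) M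
  - delta * sum_n (fun k => INR (S k) ^ 2 * Rabs (x k - 1 / INR (S k) ^ 2)) M
  <= sum_n (f_term z) M.
Proof.
  intros Hd; rewrite <- (sum_n_mult_l delta), <- sum_n_minus.
  apply sum_n_le; intros k _; apply f_term_perturb, Hd.
Qed.

(* [f] is the supremum of its partial sums, each of which depends on finitely many
   coordinates and hence is continuous. *)
Lemma f_lsc : lsc_cc f_cc.
Proof.
  intros x [N HN] eps Heps.
  assert (Hpart : is_lim_seq (sum_n (f_term x)) (f_cc x)).
  { unfold f_cc; fold (f_term x); rewrite (is_series_unique _ _ (is_series_f_term x N HN)).
    exact (is_series_f_term x N HN). }
  destruct (proj2 (is_lim_seq_spec _ _) Hpart (mkposreal (eps / 2) ltac:(lra))) as [M HM].
  specialize (HM M (le_n _)); simpl in HM; apply Rabs_def2 in HM.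
  set (K := sum_n (fun k => INR (S k) ^ 2 * Rabs (x k - 1 / INR (S k) ^ 2)) M).
  assert (HK : 0 <= K).
  { apply sum_n_nonneg; intros k; apply Rmult_le_pos; [apply pow2_ge_0 | apply Rabs_pos]. }
  exists (eps / (2 * (K + 1))); split; [apply Rdiv_lt_0_compat; lra|].
  intros z Hz Hzx.
  assert (Hcoord : forall k, Rabs (z k - x k) < eps / (2 * (K + 1))).
  { intros k; apply Rle_lt_trans with (l2norm (vsub z x)); [|exact Hzx].
    apply (Rabs_le_l2norm (vsub z x)).
    destruct Hz as [N' HN']; exists (Nat.max N N'); intros n Hn.
    unfold vsub; rewrite HN, HN' by lia; ring. }
  assert (Hsmall : eps / (2 * (K + 1)) * K <= eps / 2).
  { apply (Rmult_le_reg_r (2 * (K + 1))); [lra|]; field_simplify; nra. }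
  generalize (sum_n_f_term_perturb x z M _ Hcoord) (f_cc_ge_partial z M Hz).
  fold K; lra.
Qed.

Lemma vzero_in_core : in_core Adomg_minus_domf vzero.
Proof.
  intros d [N HN]; exists 1; split; [lra|]; intros t Ht.
  exists vzero, (vopp (vscal t d)); repeat split.
  - exact is_cc_vzero.
  - exists N; intros n Hn; unfold vopp, vscal; rewrite HN by lia; ring.
  - apply functional_extensionality; intros [|n];
      unfold vadd, vsub, vopp, vscal, A, vzero; simpl; ring.
Qed.

Theorem mainTheorem12 :
  (forall y, is_l2 y -> is_l2 (Astar y) /\
     forall x, is_cc x -> pairing (Astar y) x = pairing y (A x)) /\
  (forall y1 y2, is_l2 y1 -> is_l2 y2 -> Astar y1 = Astar y2 -> y1 = y2) /\
  (conj g_cc vzero = Finite 0 /\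
   forall y, is_l2 y -> y <> vzero -> conj g_cc y = p_infty) /\
  (forall y, is_l2 y -> Rbar_lt (conj g_cc (vopp (Astar y))) p_infty -> y = vzero) /\
  dual_value = Finite 0 /\ dual_obj vzero = Finite 0 /\
  primal_value = Finite (PI ^ 2 / 12) /\ 0 < PI ^ 2 / 12 /\
  Rbar_lt dual_value primal_value /\
  convex_cc f_cc /\ convex_cc g_cc /\ lsc_cc f_cc /\ lsc_cc g_cc /\
  in_core Adomg_minus_domf vzero.
Proof.
  assert (Hgap : 0 < PI ^ 2 / 12) by (generalize PI_RGT_0; intros; nra).
  split; [intros y Hy; split; [apply is_l2_Astar, Hy | intros x Hx; apply pairing_Astar, Hx]|].
  split; [exact Astar_inj|].
  split; [split; [exact conj_g_vzero | intros y _; apply conj_g_neq0]|].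
  split; [exact conj_g_Astar_finite|].
  split; [exact dual_value_eq0|].
  split; [exact dual_obj_vzero|].
  split; [exact primal_value_eq|].
  split; [exact Hgap|].
  split; [rewrite dual_value_eq0, primal_value_eq; exact Hgap|].
  split; [exact f_convex|].
  split; [exact g_convex|].
  split; [exact f_lsc|].
  split; [exact g_lsc|].
  exact vzero_in_core.
Qed.
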